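(* Assume the standing hypotheses (H). Then $\alpha(G)\le 4$, i.e., every part of $G$ has at most $4$ vertices.
   Context: $\alpha(G)$ is the independence number. A list assignment $L$ assigns to each vertex $v$ a set $L(v)$ of colors; an $L$-coloring is a proper coloring $f$ with $f(v)\in L(v)$ for all $v$; $\mathrm{ch}$ denotes choice number and $\chi$ chromatic number. A part of a complete multipartite graph is one of its maximal stable sets. Standing hypotheses (H): $k\ge1$ and $n\ge 2k+2$ are integers; $G$ is a complete $k$-partite graph (exactly $k$ nonempty parts) on $n$ vertices; $L$ is a list assignment for $G$ with $|L(v)|\ge\lceil (n+k-1)/3\rceil$ for every vertex $v$; $G$ has no $L$-coloring; $\left|\bigcup_{v\in V(G)}L(v)\right|\le n-1$; and every graph $H$ with fewer than $n$ vertices satisfies $\mathrm{ch}(H)\le\max\{\chi(H),\lceil(|V(H)|+\chi(H)-1)/3\rceil\}$. *)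

From mathcomp Require Import all_boot.
Set Implicit Arguments. Unset Strict Implicit. Unset Printing Implicit Defensive.

Definition simple_graph (T : finType) (e : rel T) : Prop :=
  irreflexive e /\ symmetric e.

Definition proper_coloring (T : finType) (C : eqType) (e : rel T) (f : T -> C) : Prop :=
  forall x y, e x y -> f x != f y.

(* List assignments: colours are natural numbers, L v is a list of colours;
   its size |L(v)| is the number of distinct colours in it. *)
Definition list_size (s : seq nat) : nat := size (undup s).

Definition L_colorable (T : finType) (e : rel T) (L : T -> seq nat) : Prop :=
  exists f : T -> nat, proper_coloring e f /\ forall v, f v \in L v.

Definition choosable (T : finType) (e : rel T) (m : nat) : Prop :=
  forall L : T -> seq nat, (forall v, m <= list_size (L v)) -> L_colorable e L.

Definition k_colorable (T : finType) (e : rel T) (k : nat) : bool :=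
  [exists f : {ffun T -> 'I_k}, [forall x, [forall y, e x y ==> (f x != f y)]]].

(* Chromatic number: least k (k <= #|T| always works) such that e is
   k-colourable. *)
Definition chi (T : finType) (e : rel T) : nat :=
  find (k_colorable e) (iota 0 #|T|.+1).

Definition stable (T : finType) (e : rel T) (S : {set T}) : bool :=
  [forall x in S, forall y in S, ~~ e x y].

Definition alpha (T : finType) (e : rel T) : nat :=
  \max_(S : {set T} | stable e S) #|S|.

(* e is a complete k-partite graph with exactly k nonempty parts:
   the parts are the fibres of a surjection p onto 'I_k, and two vertices are
   adjacent iff they lie in different parts. *)
Definition complete_multipartite (T : finType) (e : rel T) (k : nat) : Prop :=
  exists p : T -> 'I_k,
    (forall i : 'I_k, exists x, p x = i) /\ (forall x y, e x y = (p x != p y)).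

Definition ceil3 (a : nat) : nat := (a + 2) %/ 3.

Definition ohba_bound (T : finType) (e : rel T) : nat :=
  maxn (chi e) (ceil3 (#|T| + chi e - 1)).

From mathcomp Require Import all_boot.
From mathcomp Require Import zify.
Set Implicit Arguments. Unset Strict Implicit. Unset Printing Implicit Defensive.

(* Let G be a complete k-partite graph on n >= 2k+2 vertices which is a
   minimal counterexample to Ohba-type choosability, with lists of size at
   least m = ceil((n+k-1)/3) and at most n-1 colours in total.

   Key observation: a colour c lies in the lists of at most two vertices of
   any part.  Otherwise delete three (or more) such vertices, which form a
   stable set, and remove c from the remaining lists: the smaller graph has
   chromatic number at most k <= m-1 (as n >= 2k+2) and at most n-3
   vertices, so its bound is at most m-1, while its lists keep size at least
   m-1; by minimality it is
   colourable, and colouring the deleted vertices with c colours G.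

   Double counting colour-vertex incidences inside a part P then gives
   |P| * m <= 2 (n-1), i.e. |P| (n+k-1) <= 6 (n-1).  This forces |P| <= 5,
   hence n <= 5k, which in turn forces |P| <= 4.  Finally every stable set of
   a complete multipartite graph lies inside one part, so alpha(G) <= 4. *)

Lemma chi_le (T : finType) (e : rel T) (k : nat) : k_colorable e k -> chi e <= k.
Proof.
move=> colk; rewrite /chi leqNgt; apply/negP => lt_k_chi.
have k_le_T : k < #|T|.+1.
  by have := leq_trans lt_k_chi (find_size _ _); rewrite size_iota.
by have := before_find 0 lt_k_chi; rewrite nth_iota // add0n colk.
Qed.

Lemma list_size_filter (s : seq nat) (c : nat) :
  list_size s <= (list_size [seq x <- s | x != c]).+1.
Proof.
rewrite /list_size -filter_undup size_filter -(count_predC (predC1 c)).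
have le1 : count (predC (predC1 c)) (undup s) <= 1.
  rewrite (eq_count (a2 := pred1 c)) => [|x /=]; last by rewrite negbK.
  by rewrite count_uniq_mem ?undup_uniq //; case: (c \in _).
by rewrite -addn1 leq_add.
Qed.

Lemma size_undup_count (s U : seq nat) :
  uniq U -> {subset s <= U} -> size (undup s) = count (mem s) U.
Proof.
move=> uU sU.
have perm_sU : perm_eq (undup s) [seq c <- U | c \in s].
  apply: uniq_perm; rewrite ?undup_uniq ?filter_uniq // => x.
  by rewrite mem_undup mem_filter; case sx: (x \in s) => //=; rewrite sU.
by rewrite (perm_size perm_sU) size_filter.
Qed.

Definition palette (T : finType) (L : T -> seq nat) : seq nat :=
  undup (flatten [seq L v | v <- enum T]).

Lemma sum_list_size (T : finType) (L : T -> seq nat) (A : {set T}) :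
  \sum_(v in A) list_size (L v) =
  \sum_(c <- palette L) #|[set v in A | c \in L v]|.
Proof.
have size_as_count v : list_size (L v) = \sum_(c <- palette L | c \in L v) 1.
  rewrite sum1_count; apply: size_undup_count; first exact: undup_uniq.
  by move=> x xL; rewrite mem_undup; apply/flatten_mapP; exists v; rewrite ?mem_enum.
under eq_bigr => v _ do rewrite size_as_count.
rewrite (exchange_big_dep predT) //=; apply: eq_bigr => c _.
by rewrite sum1dep_card; apply: eq_card => v; rewrite !inE.
Qed.

Lemma part_size_cases (k n m s : nat) :
  0 < k -> 0 < n -> n + k - 1 <= 3 * m -> s * m <= 2 * (n - 1) ->
  s <= 4 \/ (s = 5 /\ 5 * k < n).
Proof.
move=> k_pos n_pos m_large weight.
have : s * (n + k - 1) <= 6 * (n - 1).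
  by apply: leq_trans (leq_mul (leqnn s) m_large) _; rewrite mulnCA mulnA; lia.
case: (ltnP s 5) => [|s_ge5]; first by left.
have [->|s_ge6] := eqVneq s 5; first by right; lia.
have : 6 * (n + k - 1) <= s * (n + k - 1) by rewrite leq_mul2r; lia.
lia.
Qed.

Lemma stable_subset (T : finType) (e : rel T) (A B : {set T}) :
  A \subset B -> stable e B -> stable e A.
Proof.
move=> /subsetP sAB /forall_inP stB; apply/forall_inP => x xA.
by apply/forall_inP => y yA; move/forall_inP: (stB x (sAB x xA)); apply; apply: sAB.
Qed.

Section Deletion.
Variables (T : finType) (e : rel T) (S : {set T}).

Definition remove_graph : rel {x : T | x \notin S} := fun x y => e (val x) (val y).

Lemma remove_graph_simple : simple_graph e -> simple_graph remove_graph.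
Proof. by case=> irr sym; split => [x | x y]; [exact: irr | exact: sym]. Qed.

Lemma card_remove : #|{: {x : T | x \notin S}}| = #|T| - #|S|.
Proof.
rewrite card_sig -(cardC S) addKn.
by apply: eq_card => x; rewrite !inE.
Qed.

Lemma extend_colouring (L : T -> seq nat) (c : nat) :
  stable e S -> {in S, forall v, c \in L v} ->
  L_colorable remove_graph (fun x => [seq y <- L (val x) | y != c]) ->
  L_colorable e L.
Proof.
move=> /forallP stS cS [f' [proper_f' in_f']].
pose f (x : T) := odflt c (omap f' (insub x)).
have fS x : x \in S -> f x = c by move=> xS; rewrite /f insubN // negbK.
have fnS x (xS : x \notin S) : f x = f' (Sub x xS) by rewrite /f insubT.
have f'c y : f' y != c by have := in_f' y; rewrite mem_filter => /andP [].
exists f; split => [x y exy | v].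
  case: (boolP (x \in S)) => xS; case: (boolP (y \in S)) => yS.
  - by move: (stS x); rewrite xS => /forall_inP /(_ y yS); rewrite exy.
  - by rewrite fS // fnS eq_sym f'c.
  - by rewrite (fS y) // fnS f'c.
  - by rewrite !fnS; apply: proper_f'.
case: (boolP (v \in S)) => vS; first by rewrite fS // cS.
by rewrite fnS; have := in_f' (Sub v vS); rewrite mem_filter => /andP [].
Qed.

End Deletion.
Arguments remove_graph {T} e S.

Section Multipartite.
Variables (T : finType) (e : rel T) (k : nat) (p : T -> 'I_k).
Hypothesis adj_p : forall x y, e x y = (p x != p y).

Definition part (i : 'I_k) : {set T} := [set v | p v == i].

Lemma part_stable (i : 'I_k) : stable e (part i).
Proof.
apply/forall_inP => x; rewrite inE => /eqP px.
by apply/forall_inP => y; rewrite inE adj_p px => /eqP ->; rewrite eqxx.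
Qed.

Lemma chi_remove (S : {set T}) : chi (remove_graph e S) <= k.
Proof.
apply: chi_le; apply/existsP; exists [ffun x => p (val x)].
apply/forallP => x; apply/forallP => y; apply/implyP.
by rewrite /remove_graph adj_p !ffunE.
Qed.

Lemma sum_card_parts : \sum_(i < k) #|part i| = #|T|.
Proof.
rewrite -sum1_card (partition_big p predT) //=.
by apply: eq_bigr => i _; rewrite sum1_card; apply: eq_card => v; rewrite !inE.
Qed.

(* A stable set has no two vertices in different parts, so it lies in a
   single part; hence alpha is bounded by any bound on the parts. *)
Lemma alpha_le_parts (b : nat) : (forall i, #|part i| <= b) -> alpha e <= b.
Proof.
move=> part_le; apply/bigmax_leqP => A /forall_inP stA.
have [->|[x xA]] := set_0Vmem A; first by rewrite cards0.
apply: leq_trans (part_le (p x)); apply/subset_leq_card/subsetP => y yA.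
by move: (stA x xA) => /forall_inP /(_ y yA); rewrite adj_p negbK inE eq_sym.
Qed.

End Multipartite.

Section MinimalCounterexample.
Variables (k n : nat) (T : finType) (e : rel T) (L : T -> seq nat) (p : T -> 'I_k).
Hypotheses (n_large : 2 * k + 2 <= n) (simple_e : simple_graph e) (card_T : #|T| = n).
Hypothesis adj_p : forall x y, e x y = (p x != p y).
Hypothesis list_large : forall v, ceil3 (n + k - 1) <= list_size (L v).
Hypothesis not_colourable : ~ L_colorable e L.
Hypothesis minimal : forall (T' : finType) (e' : rel T'),
  simple_graph e' -> #|T'| < n -> choosable e' (ohba_bound e').

Lemma colour_in_part_le2 (i : 'I_k) (c : nat) :
  #|[set v in part p i | c \in L v]| <= 2.
Proof.
set S := [set v in part p i | c \in L v].
rewrite leqNgt; apply/negP => S_large; apply: not_colourable.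
have S_part : S \subset part p i by apply/subsetP => v; rewrite inE => /andP [].
apply: (@extend_colouring _ _ S _ c).
- exact: stable_subset S_part (part_stable adj_p i).
- by move=> v; rewrite inE => /andP [].
have S_le : #|S| <= n by rewrite -card_T max_card.
have chi_k := chi_remove adj_p S.
have bound_small : ohba_bound (remove_graph e S) <= ceil3 (n + k - 1) - 1.
  by rewrite /ohba_bound geq_max /ceil3 card_remove card_T; lia.
apply: minimal; first exact: remove_graph_simple.
  by rewrite card_remove card_T; lia.
move=> v; apply: leq_trans bound_small _.
by have := list_large (val v); have := list_size_filter (L (val v)) c; lia.
Qed.

Lemma part_weight (i : 'I_k) :
  #|part p i| * ceil3 (n + k - 1) <= 2 * size (palette L).
Proof.
rewrite -sum_nat_const.
apply: leq_trans (_ : \sum_(v in part p i) list_size (L v) <= _).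
  by apply: leq_sum => v _; exact: list_large.
rewrite sum_list_size.
apply: leq_trans (_ : \sum_(c <- palette L) 2 <= _).
  by apply: leq_sum => c _; exact: colour_in_part_le2.
by rewrite big_const_seq count_predT iter_addn_0 mulnC.
Qed.
End MinimalCounterexample.

Theorem lemma13 (k n : nat) (T : finType) (e : rel T) (L : T -> seq nat) :
  1 <= k ->
  2 * k + 2 <= n ->
  simple_graph e ->
  #|T| = n ->
  complete_multipartite e k ->
  (forall v, ceil3 (n + k - 1) <= list_size (L v)) ->
  ~ L_colorable e L ->
  size (undup (flatten [seq L v | v <- enum T])) <= n - 1 ->
  (forall (T' : finType) (e' : rel T'),
      simple_graph e' -> #|T'| < n -> choosable e' (ohba_bound e')) ->
  alpha e <= 4.
Proof.
move=> k_pos n_large simple_e card_T [p [_ adj_p]] list_large not_colourable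
  few_colours minimal.
have m_large : n + k - 1 <= 3 * ceil3 (n + k - 1) by rewrite /ceil3; lia.
have part_cases i : #|part p i| <= 4 \/ (#|part p i| = 5 /\ 5 * k < n).
  apply: part_size_cases m_large _; [exact: k_pos | lia |].
  apply: leq_trans (part_weight n_large simple_e card_T adj_p list_large
    not_colourable minimal i) _.
  by rewrite leq_mul2l few_colours orbT.
have n_le : n <= 5 * k.
  rewrite -card_T -(sum_card_parts p).
  apply: leq_trans (_ : \sum_(i < k) 5 <= _); last by rewrite sum_nat_const card_ord mulnC.
  by apply: leq_sum => i _; case: (part_cases i) => [/leq_trans -> | [-> _]].
apply: (alpha_le_parts adj_p) => i.
by case: (part_cases i) => [// | [_ n_gt]]; lia.
Qed.
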